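(* The generating function $$G_{(123,132)}(x,p,q,y,z)=\sum_{n\ge 0}\ \sum_{\pi\in S_n(123,132)} x^n p^{\operatorname{asc}(\pi)} q^{\operatorname{des}(\pi)} y^{\operatorname{MNA}(\pi)} z^{\operatorname{MND}(\pi)}$$ is equal to $$\frac{A}{1 - 2 q^2 x^2 z - p q x^2 y z - 2 p q^2 x^3 y z + q^4 x^4 z^2 - p q^3 x^4 y z^2},$$ where $$A=1 + x + p x^2 y + q x^2 z - 2 q^2 x^2 z - q^2 x^3 z - p q x^2 y z + 2 p q x^3 y z - 2 p q^2 x^3 y z - q^3 x^4 z^2 + q^4 x^4 z^2 + p q^2 x^4 y z^2 - p q^3 x^4 y z^2.$$
   Context: For $n\ge 0$, $S_n$ denotes the set of permutations $\pi=\pi_1\pi_2\cdots\pi_n$ of $[n]=\{1,\dots,n\}$ in one-line notation ($S_0$ consists of the empty permutation, for which all statistics below are $0$). A permutation $\pi\in S_n$ avoids a pattern $\tau\in S_k$ if there are no indices $i_1<\dots<i_k$ such that $\pi_{i_a}<\pi_{i_b}$ if and only if $\tau_a<\tau_b$; $S_n(\tau,\rho)$ is the set of permutations in $S_n$ avoiding both $\tau$ and $\rho$. $\operatorname{asc}(\pi)$ (resp. $\operatorname{des}(\pi)$) is the number of $i\in[n-1]$ with $\pi_i<\pi_{i+1}$ (resp. $\pi_i>\pi_{i+1}$). $\operatorname{MNA}(\pi)$ is the maximum size of a set $I\subseteq[n-1]$ such that $\pi_i<\pi_{i+1}$ for all $i\in I$ and $|i-j|\ge 2$ for distinct $i,j\in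 I$ (maximum number of non-overlapping ascents); $\operatorname{MND}(\pi)$ is defined analogously with $\pi_i>\pi_{i+1}$ (maximum number of non-overlapping descents). *)

From mathcomp Require Import all_boot all_order all_algebra all_fingroup.
Set Implicit Arguments. Unset Strict Implicit. Unset Printing Implicit Defensive.
Import GRing.Theory.

(* One-line notation of pi : 'S_n, with values shifted to 0..n-1 (0-based). *)
Definition oneline n (pi : 'S_n) : seq nat := [seq val (pi i) | i <- enum 'I_n].

Definition contains n k (pi : 'S_n) (tau : 'S_k) : bool :=
  [exists f : {ffun 'I_k -> 'I_n},
     [forall a : 'I_k, forall b : 'I_k,
        ((a < b) ==> (f a < f b)) &&
        ((pi (f a) < pi (f b)) == (tau a < tau b))]].

Definition avoids n k (pi : 'S_n) (tau : 'S_k) : bool := ~~ contains pi tau.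

(* the patterns 123 and 132 (0-based: 012 and 021) *)
Definition pat123 : 'S_3 := 1%g.
Definition pat132 : 'S_3 := tperm (inord 1 : 'I_3) (inord 2 : 'I_3).

Definition is_asc n (pi : 'S_n) (i : nat) : bool :=
  (i.+1 < n) && (nth 0 (oneline pi) i < nth 0 (oneline pi) i.+1).
Definition is_des n (pi : 'S_n) (i : nat) : bool :=
  (i.+1 < n) && (nth 0 (oneline pi) i > nth 0 (oneline pi) i.+1).

Definition asc n (pi : 'S_n) : nat := count (is_asc pi) (iota 0 n).
Definition des n (pi : 'S_n) : nat := count (is_des pi) (iota 0 n).

Definition nonoverlap n (I : {set 'I_n}) : bool :=
  [forall i in I, forall j in I, (i != j) ==> ((i.+1 < j) || (j.+1 < i))].

Definition MNA n (pi : 'S_n) : nat :=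
  \max_(I : {set 'I_n} | [forall i in I, is_asc pi i] && nonoverlap I) #|I|.
Definition MND n (pi : 'S_n) : nat :=
  \max_(I : {set 'I_n} | [forall i in I, is_des pi i] && nonoverlap I) #|I|.

Local Open Scope ring_scope.

Definition Gcoef (R : comNzRingType) (p q y z : R) (n : nat) : R :=
  \sum_(pi : 'S_n | avoids pi pat123 && avoids pi pat132)
     (p ^+ asc pi  *  q ^+ des pi  *  y ^+ MNA pi  *  z ^+ MND pi).

Definition Apoly (R : comNzRingType) (p q y z : R) : {poly R} :=
  1 + 'X + (p * y)%:P  *  'X^2 + (q * z)%:P  *  'X^2 - (2 * q^+2 * z)%:P  *  'X^2
  - (q^+2 * z)%:P  *  'X^3 - (p * q * y * z)%:P  *  'X^2 + (2 * p * q * y * z)%:P  *  'X^3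
  - (2 * p * q^+2 * y * z)%:P  *  'X^3 - (q^+3 * z^+2)%:P  *  'X^4 + (q^+4 * z^+2)%:P  *  'X^4
  + (p * q^+2 * y * z^+2)%:P  *  'X^4 - (p * q^+3 * y * z^+2)%:P  *  'X^4.

Definition Dpoly (R : comNzRingType) (p q y z : R) : {poly R} :=
  1 - (2 * q^+2 * z)%:P  *  'X^2 - (p * q * y * z)%:P  *  'X^2 - (2 * p * q^+2 * y * z)%:P  *  'X^3
  + (q^+4 * z^+2)%:P  *  'X^4 - (p * q^+3 * y * z^+2)%:P  *  'X^4.

(* A permutation contains 123 or 132 iff some entry has two larger entries to its right.
   Hence the avoiders of length n+1 arise exactly by prepending one of the two largest
   values to an avoider of length n (shifting the entries above it).  MNA and MND are
   computed by the greedy left-to-right matching of the ascent/descent bit sequence, and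
   prepending a bit changes the greedy count according to the parity of the leading run.
   So the weight is driven by two bits of state -- does the avoider start with its
   maximum, and is its leading descent run even -- giving a 4x4 transfer matrix whose
   characteristic polynomial is x^4 D(1/x); Cayley-Hamilton then yields D G = A. *)

From mathcomp Require Import all_boot all_order all_algebra all_fingroup.
From mathcomp Require Import ring zify.
Set Implicit Arguments. Unset Strict Implicit. Unset Printing Implicit Defensive.
Import GRing.Theory.

Fixpoint greedy (bs : bitseq) : nat :=
  match bs with
  | [::] => 0
  | [:: true] => 1
  | true :: _ :: bs' => (greedy bs').+1
  | false :: bs' => greedy bs'
  end.

Fixpoint lead_run (bs : bitseq) : nat :=
  if bs is true :: bs' then (lead_run bs').+1 else 0.

Lemma greedy_cons_true bs : greedy (true :: bs) = greedy bs + ~~ odd (lead_run bs).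
Proof.
elim: bs => [|[] bs IH] //; last by rewrite /= addn1.
by rewrite IH /= negbK -addnA; case: (odd (lead_run bs)); rewrite addn1.
Qed.

Lemma count_nth_iota n bs : size bs <= n -> count (nth false bs) (iota 0 n) = count id bs.
Proof.
move=> le_bs_n; rewrite -(subnKC le_bs_n) iotaD count_cat add0n.
have -> : count (nth false bs) (iota 0 (size bs)) = count id bs.
  by rewrite -[in RHS](mkseq_nth false bs) count_map.
rewrite (@eq_in_count _ _ pred0 (iota (size bs) _)) ?count_pred0 ?addn0 // => i.
by rewrite mem_iota => /andP [le_i _]; rewrite nth_default.
Qed.

Lemma nonoverlapP n (I : {set 'I_n}) :
  reflect {in I &, forall i j : 'I_n, i != j -> (i.+1 < j) || (j.+1 < i)} (nonoverlap I).
Proof.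
apply: (iffP forall_inP) => [sepI i j iI jI | sepI i iI].
  by move/forall_inP/(_ j jI)/implyP: (sepI i iI).
by apply/forall_inP => j jI; apply/implyP; apply: sepI.
Qed.

Section GreedyMatching.
Variables (n : nat) (bs : bitseq).
Hypothesis size_bs : size bs <= n.

Definition matching (I : {set 'I_n}) := [forall i in I, nth false bs i] && nonoverlap I.

Lemma greedy_drop k : greedy (drop k bs) =
  if nth false bs k then (greedy (drop k.+2 bs)).+1 else greedy (drop k.+1 bs).
Proof.
have [lt_k|le_k] := ltnP k (size bs); last first.
  by rewrite nth_default // !drop_oversize // (leq_trans le_k).
rewrite (drop_nth false lt_k); case: (nth false bs k) => //.
have [lt_k1|le_k1] := ltnP k.+1 (size bs); first by rewrite (drop_nth false lt_k1).
by rewrite !drop_oversize // ltnW.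
Qed.

Lemma card_matching_tail k I :
  matching I -> #|[set i in I | k <= i]| <= greedy (drop k bs).
Proof.
move=> /andP [/forall_inP I_bs /nonoverlapP I_sep].
move: (leqnn (size bs - k)); move: {2}(size bs - k) => d.
elim: d k => [|d IH] k le_d.
  rewrite drop_oversize; last by lia.
  rewrite leqn0 cards_eq0; apply/eqP/setP => i; rewrite !inE.
  apply/negbTE/andP => -[iI le_k_i]; move: (I_bs i iI).
  by rewrite nth_default //; lia.
rewrite greedy_drop; case bs_k: (nth false bs k).
  have le1 : #|[set i in I | k <= i <= k.+1]| <= 1.
    apply/card_le1_eqP => i j; rewrite !inE => /andP [iI ik] /andP [jI jk].
    by have [// | /(I_sep j i jI iI)] := eqVneq j i; lia.
  rewrite -addn1; apply: leq_trans _ (leq_add (IH k.+2 _) le1); last by lia.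
  apply: leq_trans _ (leq_card_setU _ _); apply: subset_leq_card.
  by apply/subsetP => i; rewrite !inE => /andP [-> le_k_i]; lia.
apply: leq_trans _ (IH k.+1 _); last by lia.
apply: subset_leq_card; apply/subsetP => i; rewrite !inE => /andP [iI le_k_i].
by rewrite iI ltn_neqAle le_k_i andbT; apply: contraTneq (I_bs i iI) => <-; rewrite bs_k.
Qed.

Lemma greedy_matching_tail k :
  exists I, [/\ matching I, {in I, forall i : 'I_n, k <= i} & #|I| = greedy (drop k bs)].
Proof.
move: (leqnn (size bs - k)); move: {2}(size bs - k) => d.
elim: d k => [|d IH] k le_d.
  rewrite drop_oversize; last by lia.
  exists set0; rewrite cards0; split=> //; last by move=> i; rewrite inE.
  by apply/andP; split; [apply/forall_inP | apply/nonoverlapP] => i; rewrite inE.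
rewrite greedy_drop; case bs_k: (nth false bs k); last first.
  have [J [mJ geJ cardJ]] := IH k.+1 ltac:(lia).
  by exists J; split=> // i /geJ; apply: ltnW.
have lt_k_n : k < n.
  apply: leq_trans size_bs; rewrite ltnNge; apply/negP => le_bs_k.
  by rewrite nth_default in bs_k.
have [J [/andP [/forall_inP J_bs /nonoverlapP J_sep] geJ cardJ]] := IH k.+2 ltac:(lia).
pose ok := Ordinal lt_k_n.
have okJ : ok \notin J by apply/negP => /geJ /=; lia.
exists (ok |: J); split; last by rewrite cardsU1 okJ cardJ.
- apply/andP; split.
    by apply/forall_inP => i; rewrite in_setU1 => /orP [/eqP -> // | /J_bs].
  apply/nonoverlapP => i j; rewrite !in_setU1.
  move=> /orP [/eqP -> | iJ] /orP [/eqP -> | jJ]; last exact: J_sep.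
  + by rewrite eqxx.
  + by move=> _; apply/orP; left; apply: geJ.
  + by move=> _; apply/orP; right; apply: geJ.
- by move=> i; rewrite in_setU1 => /orP [/eqP -> // | /geJ]; lia.
Qed.

Lemma max_matching : \max_(I | matching I) #|I| = greedy bs.
Proof.
apply/eqP; rewrite eqn_leq; apply/andP; split.
  apply/bigmax_leqP => I /(card_matching_tail 0); rewrite drop0.
  by rewrite (_ : [set i in I | 0 <= i] = I) //; apply/setP => i; rewrite inE andbT.
have [I [mI _ cardI]] := greedy_matching_tail 0.
by rewrite -[bs in greedy bs]drop0 -cardI; apply: leq_bigmax_cond.
Qed.

End GreedyMatching.

Definition asc_bits (s : seq nat) : bitseq := if s is a :: t then pairmap ltn a t else [::].

Lemma size_asc_bits s : size (asc_bits s) = (size s).-1.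
Proof. by case: s => //= a t; rewrite size_pairmap. Qed.

Lemma nth_asc_bits s i :
  nth false (asc_bits s) i = (i.+1 < size s) && (nth 0 s i < nth 0 s i.+1).
Proof.
case: s => [|a t] /=; first by rewrite nth_nil.
have [lt_i_t | le_t_i] := ltnP i (size t).
  by rewrite (nth_pairmap 0) // ltnS lt_i_t.
by rewrite nth_default ?size_pairmap // ltnS ltnNge le_t_i.
Qed.

Lemma nth_des_bits s i : uniq s ->
  nth false (map negb (asc_bits s)) i = (i.+1 < size s) && (nth 0 s i.+1 < nth 0 s i).
Proof.
move=> uniq_s; have [lt_i | le_i] := ltnP i.+1 (size s); last first.
  by rewrite nth_default // size_map size_asc_bits; case: (size s) le_i.
rewrite (nth_map false) ?size_asc_bits ?ltn_predRL //.
rewrite nth_asc_bits lt_i -leqNgt leq_eqVlt (nth_uniq 0 lt_i (ltnW lt_i) uniq_s).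
by rewrite gtn_eqF.
Qed.

Lemma count_gt1P (T : Type) (x0 : T) (P : pred T) s :
  reflect (exists j k, [/\ j < k, k < size s, P (nth x0 s j) & P (nth x0 s k)])
          (1 < count P s).
Proof.
elim: s => [|b s IH] /=; first by right => -[j [k [_ /=]]]; lia.
apply: (iffP idP) => [|[[|j] [[|k] []]]] //=.
- case Pb: (P b) => /=.
    by rewrite add1n ltnS -has_count => /(has_nthP x0) [k lt_k Pk]; exists 0, k.+1.
  by rewrite add0n => /IH [j [k [? ? ? ?]]]; exists j.+1, k.+1.
- move=> _ lt_k -> Pk; rewrite add1n ltnS -has_count.
  by apply/(has_nthP x0); exists k.
- move=> lt_jk lt_k Pj Pk; apply: leq_trans (leq_addl _ _).
  by apply/IH; exists j, k.
Qed.

Fixpoint has_two_larger_right (s : seq nat) : bool :=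
  if s is a :: t then (1 < count (ltn a) t) || has_two_larger_right t else false.

Lemma has_two_larger_rightP s :
  reflect (exists i j k, [/\ i < j, j < k, k < size s,
                             nth 0 s i < nth 0 s j & nth 0 s i < nth 0 s k])
          (has_two_larger_right s).
Proof.
elim: s => [|a s IH] /=; first by right => -[i [j [k [_ _ /=]]]]; lia.
apply: (iffP orP) => [[/(count_gt1P 0) [j [k [? ? ? ?]]] | /IH [i [j [k [? ? ? ? ?]]]]] | ].
- by exists 0, j.+1, k.+1.
- by exists i.+1, j.+1, k.+1.
case=> -[|i] [[|j] [[|k] []]] //= lt_ij lt_jk lt_k lt_i_j lt_i_k.
- by left; apply/(count_gt1P 0); exists j, k.
- by right; apply/IH; exists i, j, k.
Qed.

Lemma bump_mono a : {mono bump a : u v / u < v}.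
Proof. by move=> u v; rewrite !ltnNge leq_bump2. Qed.

Lemma asc_bits_map f s : {mono f : u v / u < v} -> asc_bits (map f s) = asc_bits s.
Proof.
move=> f_mono; case: s => [|a t] //=.
by elim: t a => [|b t IH] a //=; rewrite f_mono IH.
Qed.

Lemma has_two_larger_right_map f s :
  {mono f : u v / u < v} -> has_two_larger_right (map f s) = has_two_larger_right s.
Proof.
move=> f_mono; elim: s => [|a t IH] //=.
by rewrite count_map IH (eq_count (a2 := ltn a)) // => v; apply: f_mono.
Qed.

Definition cons_bump (a : nat) (t : seq nat) : seq nat := a :: map (bump a) t.

Lemma asc_bits_cons_bump a t :
  t != [::] -> asc_bits (cons_bump a t) = (a <= head 0 t) :: asc_bits t.
Proof.
case: t => [|b t] // _; rewrite -(asc_bits_map (b :: t) (bump_mono a)) /=.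
by congr (_ :: _); rewrite /bump; case: leqP => ?; rewrite ?add1n ?add0n; lia.
Qed.

Lemma has_two_larger_right_cons_bump a t :
  has_two_larger_right (cons_bump a t) = (1 < count (leq a) t) || has_two_larger_right t.
Proof.
rewrite /= has_two_larger_right_map ?count_map; last exact: bump_mono.
rewrite (eq_count (a2 := leq a)) // => v /=.
by rewrite /bump; case: leqP => ?; rewrite ?add1n ?add0n; lia.
Qed.

Definition is_perm_seq n (s : seq nat) := [&& uniq s, all (fun v => v < n) s & size s == n].

Lemma perm_seq_iota n s : is_perm_seq n s -> perm_eq s (iota 0 n).
Proof.
case/and3P => uniq_s lt_s /eqP size_s; apply: uniq_perm; rewrite ?iota_uniq //.
have sub : {subset s <= iota 0 n} by move=> v /(allP lt_s); rewrite mem_iota.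
by have [] := uniq_min_size uniq_s sub; rewrite ?size_iota ?size_s.
Qed.

Lemma count_leq_perm_seq n s a : is_perm_seq n s -> count (leq a) s = n - a.
Proof.
move/perm_seq_iota/seq.permP ->; elim: n => [|n IH] //.
by rewrite -addn1 iotaD count_cat IH /=; lia.
Qed.

Lemma perm_seq_cons_bump n a t :
  is_perm_seq n.+1 (cons_bump a t) = (a <= n) && is_perm_seq n t.
Proof.
have a_notin : a \notin map (bump a) t.
  by apply/mapP => -[v _ /eqP]; apply/negP/neq_bump.
rewrite /is_perm_seq /= a_notin (map_inj_uniq (can_inj (bumpK a))) size_map eqSS all_map ltnS.
case: leqP => [le_an | _]; last by rewrite andbF.
congr [&& _, _ & _]; apply: eq_all => v /=.
by rewrite /bump; case: leqP => ?; rewrite ?add1n ?add0n; lia.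
Qed.

Lemma cons_bump_unbump a t : a \notin t -> cons_bump a (map (unbump a) t) = a :: t.
Proof.
move=> a_notin; congr (_ :: _); rewrite -map_comp map_id_in // => v v_t /=.
rewrite unbumpKcond (negbTE (_ : v != a)) //.
by apply: contraNneq a_notin => <-.
Qed.

(* The first entry [a] of an avoider of length m+1 has at most one larger entry. *)
Fixpoint avoiders n : seq (seq nat) :=
  if n is m.+1 then
    [seq cons_bump a t | a <- [seq a <- iota 0 n | m <= a.+1], t <- avoiders m]
  else [:: [::]].

Lemma mem_avoiders n s :
  (s \in avoiders n) = is_perm_seq n s && ~~ has_two_larger_right s.
Proof.
elim: n s => [|m IH] s; first by case: s => [|a t] //; rewrite inE /is_perm_seq andbF.
apply/allpairsP/andP => [[[a t] [a_top t_av ->]] | [perm_s avoid_s]].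
  move: a_top t_av; rewrite mem_filter mem_iota IH => /andP [ge_a lt_a] /andP [perm_t avoid_t].
  rewrite perm_seq_cons_bump has_two_larger_right_cons_bump (count_leq_perm_seq _ perm_t).
  by rewrite perm_t (negbTE avoid_t) orbF andbT; split; lia.
case: s perm_s avoid_s => [|a t] perm_s avoid_s; first by case/and3P: perm_s.
have a_notin : a \notin t by case/and3P: perm_s => /andP [].
rewrite -(cons_bump_unbump a_notin) in perm_s avoid_s *.
set t' := map (unbump a) t in perm_s avoid_s *.
rewrite perm_seq_cons_bump in perm_s; case/andP: perm_s => le_am perm_t.
rewrite has_two_larger_right_cons_bump (count_leq_perm_seq _ perm_t) negb_or in avoid_s.
case/andP: avoid_s => avoid_a avoid_t.
exists (a, t'); split => //; first by rewrite mem_filter mem_iota /=; lia.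
by rewrite IH perm_t.
Qed.

Lemma uniq_avoiders n : uniq (avoiders n).
Proof.
elim: n => [|m IH] //; apply: allpairs_uniq => //; first by rewrite filter_uniq ?iota_uniq.
by move=> [a t] [a' t'] _ _ [/= <-] /(inj_map (can_inj (bumpK a))) ->.
Qed.

Lemma avoiders_SS k :
  avoiders k.+2 = [seq cons_bump a t | a <- [:: k; k.+1], t <- avoiders k.+1].
Proof.
have top2 : [seq a <- iota 0 k.+2 | k.+1 <= a.+1] = [:: k; k.+1].
  rewrite -addn2 iotaD filter_cat (@eq_in_filter _ _ pred0 (iota 0 k)).
    by rewrite filter_pred0 /= leqnn ltnW.
  by move=> a; rewrite mem_iota /=; lia.
by rewrite -top2.
Qed.

Section OneLine.
Variable n : nat.
Implicit Types pi : 'S_n.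

Lemma size_oneline pi : size (oneline pi) = n.
Proof. by rewrite size_map size_enum_ord. Qed.

Lemma nth_oneline pi (i : 'I_n) : nth 0 (oneline pi) i = pi i.
Proof. by rewrite (nth_map i) ?size_enum_ord // nth_ord_enum. Qed.

Lemma oneline_perm_seq pi : is_perm_seq n (oneline pi).
Proof.
rewrite /is_perm_seq size_oneline eqxx andbT map_inj_uniq ?enum_uniq.
  by apply/allP => v /mapP [i _ ->]; apply: ltn_ord.
by move=> i j /val_inj /perm_inj.
Qed.

Lemma oneline_inj : injective (@oneline n).
Proof.
move=> pi1 pi2 eq_pi; apply/permP => i; apply: val_inj.
by rewrite /= -!nth_oneline eq_pi.
Qed.

Lemma oneline_onto s : is_perm_seq n s -> exists pi, oneline pi = s.
Proof.
case/and3P => uniq_s lt_s /eqP size_s.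
have lt_nth (i : 'I_n) : nth 0 s i < n by apply/(allP lt_s)/mem_nth; rewrite size_s.
have f_inj : injective (fun i => Ordinal (lt_nth i)).
  move=> i j /(congr1 val) /= /eqP; rewrite nth_uniq ?size_s // => /eqP.
  exact: val_inj.
exists (perm f_inj); apply: (@eq_from_nth _ 0); rewrite size_oneline ?size_s // => i lt_i.
by rewrite (nth_oneline _ (Ordinal lt_i)) permE.
Qed.

Lemma pat123E (a : 'I_3) : pat123 a = a.
Proof. by rewrite perm1. Qed.

Lemma pat132E (a : 'I_3) : pat132 a = nth 0 [:: 0; 2; 1] a :> nat.
Proof.
by rewrite permE /= -!(inj_eq val_inj) /= !inordK; case: a => [[|[|[|]]] ?] //=; rewrite inordK.
Qed.

Lemma contains_first_min pi (tau : 'S_3) :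
  contains pi tau -> tau ord0 < tau (inord 1) -> tau ord0 < tau (inord 2) ->
  exists i j k : 'I_n, [/\ i < j, j < k, pi i < pi j & pi i < pi k].
Proof.
move=> /existsP [f /forallP f_tau] lt_tau1 lt_tau2.
have f_lt (a b : 'I_3) : a < b -> f a < f b by case/andP: (forallP (f_tau a) b) => /implyP.
have f_cmp (a b : 'I_3) : (pi (f a) < pi (f b)) = (tau a < tau b).
  by case/andP: (forallP (f_tau a) b) => _ /eqP.
exists (f ord0), (f (inord 1)), (f (inord 2)).
by split; rewrite ?f_cmp //; apply: f_lt; rewrite !inordK.
Qed.

Lemma contains_of_triple pi (i j k : 'I_n) :
  i < j -> j < k -> pi i < pi j -> pi i < pi k ->
  contains pi (if pi j < pi k then pat123 else pat132).
Proof.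
move=> lt_ij lt_jk lt_pij lt_pik.
have ne_pjk : pi j != pi k :> nat.
  by rewrite val_eqE (inj_eq perm_inj) -val_eqE /= neq_ltn lt_jk.
apply/existsP; exists [ffun a : 'I_3 => nth i [:: i; j; k] a].
apply/forallP => a; apply/forallP => b; rewrite !ffunE; apply/andP; split.
  apply/implyP; case: a => [[|[|[|]]] ?]; case: b => [[|[|[|]]] ?] //=; lia.
apply/eqP; case: ifP => lt_pjk; rewrite ?pat123E ?pat132E;
  case: a => [[|[|[|]]] ?]; case: b => [[|[|[|]]] ?] //=; lia.
Qed.

Lemma has_two_larger_right_oneline pi :
  reflect (exists i j k : 'I_n, [/\ i < j, j < k, pi i < pi j & pi i < pi k])
          (has_two_larger_right (oneline pi)).
Proof.
apply: (iffP (has_two_larger_rightP _)); rewrite size_oneline; last first.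
  by case=> i [j [k [lt_ij lt_jk lt_pij lt_pik]]]; exists i, j, k; rewrite !nth_oneline.
case=> i [j [k [lt_ij lt_jk lt_kn]]].
have lt_jn : j < n by lia.
have lt_in : i < n by lia.
rewrite (nth_oneline _ (Ordinal lt_in)) (nth_oneline _ (Ordinal lt_jn)).
rewrite (nth_oneline _ (Ordinal lt_kn)).
by exists (Ordinal lt_in), (Ordinal lt_jn), (Ordinal lt_kn).
Qed.

Lemma avoids_123_132 pi :
  avoids pi pat123 && avoids pi pat132 = ~~ has_two_larger_right (oneline pi).
Proof.
rewrite -negb_or; congr (~~ _); apply/orP/has_two_larger_right_oneline.
  by case=> /contains_first_min; apply; rewrite ?pat123E ?pat132E inordK.
case=> i [j [k [lt_ij lt_jk lt_pij lt_pik]]].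
by have := contains_of_triple lt_ij lt_jk lt_pij lt_pik; case: ifP => _; [left | right].
Qed.

End OneLine.

Lemma lead_run_asc_bits_head_max s :
  {in s, forall v, v <= head 0 s} -> lead_run (asc_bits s) = 0.
Proof.
case: s => [|a [|b t]] //= le_a.
by rewrite ltnNge le_a // !inE eqxx orbT.
Qed.

Definition even_des_run (bs : bitseq) : bool := ~~ odd (lead_run (map negb bs)).

Lemma even_des_run_true bs : even_des_run (true :: bs).
Proof. by []. Qed.

Lemma even_des_run_false bs : even_des_run (false :: bs) = ~~ even_des_run bs.
Proof. by rewrite /even_des_run /= negbK. Qed.

Section Weight.
Variables (R : comNzRingType) (p q y z : R).
Local Open Scope ring_scope.

Definition bit_weight (u v : R) (bs : bitseq) : R := u ^+ count id bs * v ^+ greedy bs.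

Definition weight (bs : bitseq) : R := bit_weight p y bs * bit_weight q z (map negb bs).

Lemma weight_nil : weight [::] = 1.
Proof. by rewrite /weight /bit_weight !mulr1. Qed.

Lemma bit_weight_true u v bs :
  bit_weight u v (true :: bs) = u * v ^+ (~~ odd (lead_run bs)) * bit_weight u v bs.
Proof. by rewrite /bit_weight greedy_cons_true /= add1n exprS exprD; ring. Qed.

Lemma bit_weight_false u v bs : bit_weight u v (false :: bs) = bit_weight u v bs.
Proof. by rewrite /bit_weight /= add0n. Qed.

Lemma weight_true bs : weight (true :: bs) = p * y ^+ (~~ odd (lead_run bs)) * weight bs.
Proof. by rewrite /weight bit_weight_true /= bit_weight_false mulrA. Qed.

Lemma weight_false bs : weight (false :: bs) = q * z ^+ even_des_run bs * weight bs.
Proof. by rewrite /weight /= bit_weight_true bit_weight_false mulrCA. Qed.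

Lemma weight_oneline n (pi : 'S_n) :
  p ^+ asc pi * q ^+ des pi * y ^+ MNA pi * z ^+ MND pi = weight (asc_bits (oneline pi)).
Proof.
have uniq_pi : uniq (oneline pi) by case/and3P: (oneline_perm_seq pi).
set bs := asc_bits (oneline pi).
have size_bs : (size bs <= n)%N by rewrite size_asc_bits size_oneline leq_pred.
have size_nbs : (size (map negb bs) <= n)%N by rewrite size_map.
have asc_nth : is_asc pi =1 nth false bs by move=> i; rewrite nth_asc_bits size_oneline.
have des_nth : is_des pi =1 nth false (map negb bs).
  by move=> i; rewrite nth_des_bits // size_oneline.
have -> : asc pi = count id bs by rewrite /asc (eq_count asc_nth) count_nth_iota.
have -> : des pi = count id (map negb bs) by rewrite /des (eq_count des_nth) count_nth_iota.
have -> : MNA pi = greedy bs.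
  rewrite -(max_matching size_bs); apply: eq_bigl => I; congr (_ && _).
  by apply: eq_forallb_in => i _; rewrite asc_nth.
have -> : MND pi = greedy (map negb bs).
  rewrite -(max_matching size_nbs); apply: eq_bigl => I; congr (_ && _).
  by apply: eq_forallb_in => i _; rewrite des_nth.
by rewrite /weight /bit_weight; ring.
Qed.

Lemma Gcoef_avoiders n : Gcoef p q y z n = \sum_(s <- avoiders n) weight (asc_bits s).
Proof.
rewrite /Gcoef (eq_bigr _ (fun pi _ => weight_oneline pi)) -big_filter.
rewrite -(big_map (@oneline n) xpredT (fun s => weight (asc_bits s))).
apply: perm_big; apply: uniq_perm; rewrite ?uniq_avoiders //.
  by rewrite map_inj_uniq ?filter_uniq ?index_enum_uniq //; exact: oneline_inj.
move=> s; rewrite mem_avoiders; apply/mapP/andP => [[pi] | [/oneline_onto [pi <-] avoid]].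
  by rewrite mem_filter avoids_123_132 => /andP [avoid _] ->; rewrite oneline_perm_seq.
by exists pi; rewrite // mem_filter avoids_123_132 avoid mem_index_enum.
Qed.

End Weight.

Definition starts_with_max (s : seq nat) : bool := head 0 s == (size s).-1.

Lemma cons_bump_avoidersE k t :
  t \in avoiders k.+1 ->
  [/\ starts_with_max (cons_bump k.+1 t), asc_bits (cons_bump k.+1 t) = false :: asc_bits t,
      ~~ starts_with_max (cons_bump k t)
    & asc_bits (cons_bump k t) = starts_with_max t :: asc_bits t].
Proof.
rewrite mem_avoiders => /andP [/and3P [_ /allP lt_t /eqP size_t] _].
have t_nil : t != [::] by rewrite -size_eq0 size_t.
have le_head : head 0 t <= k by rewrite -ltnS lt_t // -nth0 mem_nth // size_t.
rewrite /starts_with_max !asc_bits_cons_bump //= !size_map size_t /=.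
split; rewrite ?eqxx //.
- by rewrite ltnNge le_head.
- by rewrite neq_ltn ltnSn.
- by rewrite eqn_leq le_head.
Qed.

Section States.
Variables (R : comNzRingType) (p q y z : R).
Local Open Scope ring_scope.

Definition state_sum m b e : R :=
  \sum_(s <- avoiders m)
     if (starts_with_max s == b) && (even_des_run (asc_bits s) == e)
     then weight p q y z (asc_bits s) else 0.

Lemma weight_cons_bump_submax k t : t \in avoiders k.+1 ->
  weight p q y z (asc_bits (cons_bump k t)) =
  (if starts_with_max t then p * y else q * z ^+ even_des_run (asc_bits t))
  * weight p q y z (asc_bits t).
Proof.
move=> t_av; have [_ _ _ ->] := cons_bump_avoidersE t_av.
case: ifP => [/eqP max_t | _]; last exact: weight_false.
rewrite weight_true lead_run_asc_bits_head_max // => v v_t.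
move: t_av; rewrite mem_avoiders max_t => /andP [/and3P [_ /allP lt_t /eqP ->] _].
by rewrite -ltnS lt_t.
Qed.

Lemma state_sum_rec k :
  [/\ state_sum k.+2 true true = q * (state_sum k.+1 true false + state_sum k.+1 false false),
      state_sum k.+2 true false = q * z * (state_sum k.+1 true true + state_sum k.+1 false true),
      state_sum k.+2 false true =
        p * y * (state_sum k.+1 true true + state_sum k.+1 true false)
        + q * state_sum k.+1 false false
    & state_sum k.+2 false false = q * z * state_sum k.+1 false true].
Proof.
have step b e : state_sum k.+2 b e = \sum_(t <- avoiders k.+1)
    ((if (false == b) && ((starts_with_max t || ~~ even_des_run (asc_bits t)) == e)
      then (if starts_with_max t then p * y else q * z ^+ even_des_run (asc_bits t))
           * weight p q y z (asc_bits t) else 0)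
   + (if (true == b) && (~~ even_des_run (asc_bits t) == e)
      then q * z ^+ even_des_run (asc_bits t) * weight p q y z (asc_bits t) else 0)).
  rewrite /state_sum avoiders_SS big_allpairs_dep big_cons big_seq1 big_split.
  congr (_ + _); apply: eq_big_seq => t t_av;
    have [max_top bits_top not_max_second bits_second] := cons_bump_avoidersE t_av.
    rewrite (negbTE not_max_second) weight_cons_bump_submax // bits_second.
    by case: (starts_with_max t); rewrite ?even_des_run_true ?even_des_run_false.
  by rewrite max_top bits_top weight_false even_des_run_false.
split; rewrite step /state_sum -?big_split ?mulr_sumr -?big_split;
  apply: eq_bigr => t _;
  case: (starts_with_max t); case: (even_des_run _); rewrite /=; ring.
Qed.

(* Components indexed by (starts_with_max, even_des_run), as in [state_sums_iter].
   Prepending the new maximum adds a leading descent; prepending the second largest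
   value adds a leading ascent exactly when the old first entry was the maximum. *)
Definition transfer (v : R * R * R * R) : R * R * R * R :=
  let: (xTT, xTF, xFT, xFF) := v in
  (q * (xTF + xFF), q * z * (xTT + xFT), p * y * (xTT + xTF) + q * xFF, q * z * xFT).

Definition total (v : R * R * R * R) : R :=
  let: (xTT, xTF, xFT, xFF) := v in xTT + xTF + xFT + xFF.

Definition transfer_coef n : R := if n is k.+1 then total (iter k transfer (1, 0, 0, 0)) else 1.

Lemma state_sums_iter k :
  (state_sum k.+1 true true, state_sum k.+1 true false,
   state_sum k.+1 false true, state_sum k.+1 false false) = iter k transfer (1, 0, 0, 0).
Proof.
elim: k => [|k IH]; first by rewrite /state_sum /= !big_cons !big_nil /= weight_nil !addr0.
by rewrite iterS -IH; have [-> -> -> ->] := state_sum_rec k.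
Qed.

Lemma Gcoef_transfer_coef n : Gcoef p q y z n = transfer_coef n.
Proof.
rewrite Gcoef_avoiders; case: n => [|k]; first by rewrite big_seq1 weight_nil.
rewrite /transfer_coef -state_sums_iter /= /state_sum -!big_split.
by apply: eq_bigr => s _; case: starts_with_max; case: even_des_run; rewrite /=; ring.
Qed.

(* Cayley-Hamilton: the characteristic polynomial of [transfer] is x^4 D(1/x). *)
Lemma total_transfer4 v :
  total (transfer (transfer (transfer (transfer v)))) =
  (2 * q ^+ 2 * z + p * q * y * z) * total (transfer (transfer v))
  + (2 * p * q ^+ 2 * y * z) * total (transfer v)
  - (q ^+ 4 * z ^+ 2 - p * q ^+ 3 * y * z ^+ 2) * total v.
Proof. by case: v => [[[xTT xTF] xFT] xFF] /=; ring. Qed.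

Lemma coef_Dpoly_transfer_coef n :
  (Dpoly p q y z * \poly_(i < n.+1) transfer_coef i)`_n = (Apoly p q y z)`_n.
Proof.
rewrite /Dpoly /Apoly !(mulrBl, mulrDl) -!mulrA mul1r !coefE.
case: n => [|[|[|[|[|m]]]]] /=; rewrite /transfer_coef /= ?iterS; try ring.
have lt_m : [/\ (m.+1.+4 < m.+2.+4)%N, (m.+3 < m.+2.+4)%N, (m.+2 < m.+2.+4)%N
               & (m.+1 < m.+2.+4)%N] by split; lia.
by case: lt_m => -> -> -> ->; rewrite total_transfer4; ring.
Qed.

End States.

Local Open Scope ring_scope.

Theorem theorem2 (R : comNzRingType) (p q y z : R) (n : nat) :
  (Dpoly p q y z * \poly_(i < n.+1) Gcoef p q y z i)`_n = (Apoly p q y z)`_n.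
Proof.
rewrite (@eq_poly _ _ _ (transfer_coef p q y z)) => [|i _]; last exact: Gcoef_transfer_coef.
exact: coef_Dpoly_transfer_coef.
Qed.
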